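(* Let $\Lambda$ be a row-finite $k$-graph with no sources and let $\alpha$ be an action of $\mathbb{Z}^l$ on $\Lambda$ by automorphisms. Then there is a unique homeomorphism $x\mapsto(x,\infty)$ from $\Lambda^\infty$ onto $(\Lambda\times_\alpha\mathbb{Z}^l)^\infty$ such that $(x,\infty)((0,0),(p,0))=(x(0,p),0)$ for all $p\in\mathbb{N}^k$.
   Context: A $k$-graph is a countable category $\Lambda$ with a functor $d:\Lambda\to\mathbb{N}^k$ with the unique factorisation property; vertices are degree-$0$ morphisms; row-finite means each $v\Lambda^n$ is finite, no sources means each $v\Lambda^n$ is nonempty. An automorphism is a bijective degree-preserving functor. $\Lambda\times_\alpha\mathbb{Z}^l$ is the $(k+l)$-graph with morphisms $\Lambda\times\mathbb{N}^l$, degree $(d(\lambda),m)\in\mathbb{N}^k\times\mathbb{N}^l$, $r(\lambda,m)=(r(\lambda),0)$, $s(\lambda,m)=(\alpha_{-m}(s(\lambda)),0)$, $(\mu,m)(\nu,n)=(\mu\alpha_m(\nu),m+n)$. For a $j$-graph $\Gamma$, $\Gamma^\infty$ is the set of degree-preserving functors $x:\Omega_j\to\Gamma$, where $\Omega_j=\{(a,b)\in\mathbb{N}^j\times\mathbb{N}^j:a\le b\}$ with $r(a,b)=(a,a)$, $s(a,b)=(b,b)$, $(a,b)(b,c)=(a,c)$, $d(a,b)=b-a$. $\Gamma^\infty$ has the topology with basis the cylinder sets $\lambda\Gamma^\infty=\{x\in\Gamma^\infty:x(0,d(\lambda))=\lambda\}$, $\lambda\in\Gamma$. *)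

From HB Require Import structures.
From mathcomp Require Import all_boot all_order all_algebra.

Set Implicit Arguments.
Unset Strict Implicit.
Unset Printing Implicit Defensive.

Import GRing.Theory.

Definition Nk (k : nat) := {ffun 'I_k -> nat}.
Definition nk0 (k : nat) : Nk k := [ffun => 0%N].
Definition nk_add k (m n : Nk k) : Nk k := [ffun i => (m i + n i)%N].
Definition nk_sub k (m n : Nk k) : Nk k := [ffun i => (m i - n i)%N].
Definition nk_le k (m n : Nk k) : bool := [forall i, m i <= n i].
Definition nk_join k l (m : Nk k) (n : Nk l) : Nk (k + l) :=
  [ffun i => match split i with inl a => m a | inr b => n b end].

Definition Zl (l : nat) := {ffun 'I_l -> int}.
Definition z0 (l : nat) : Zl l := [ffun => 0%R].
Definition zadd l (m n : Zl l) : Zl l := [ffun i => (m i + n i)%R].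
Definition zneg l (m : Zl l) : Zl l := [ffun i => (- m i)%R].
Definition zofnk l (m : Nk l) : Zl l := [ffun i => Posz (m i)].

Lemma nk_le_refl k (a : Nk k) : nk_le a a.
Proof. by apply/forallP => i. Qed.

Lemma nk_le0 k (a : Nk k) : nk_le (nk0 k) a.
Proof. by apply/forallP => i; rewrite ffunE. Qed.

(* A small category is given by its (countable) set of morphisms; objects
   are identified with identity morphisms; kr/ks are range/source,
   kcomp f g is the composite f g (meaningful when ks f = kr g). *)
Record kraw (k : nat) := KRaw {
  kmor : countType;
  kr : kmor -> kmor;
  ks : kmor -> kmor;
  kcomp : kmor -> kmor -> kmor;
  kdeg : kmor -> Nk k }.

Arguments kr {k G} f : rename.
Arguments ks {k G} f : rename.
Arguments kcomp {k G} f g : rename.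
Arguments kdeg {k G} f : rename.

Definition is_kgraph k (G : kraw k) : Prop :=
  (forall f : kmor G, kr (kr f) = kr f) /\
  (forall f : kmor G, ks (kr f) = kr f) /\
  (forall f : kmor G, kr (ks f) = ks f) /\
  (forall f : kmor G, ks (ks f) = ks f) /\
  (forall f : kmor G, kcomp (kr f) f = f) /\
  (forall f : kmor G, kcomp f (ks f) = f) /\
  (forall f g : kmor G, ks f = kr g ->
      kr (kcomp f g) = kr f /\ ks (kcomp f g) = ks g) /\
  (forall f g h : kmor G, ks f = kr g -> ks g = kr h ->
      kcomp (kcomp f g) h = kcomp f (kcomp g h)) /\
  (forall f g : kmor G, ks f = kr g ->
      kdeg (kcomp f g) = nk_add (kdeg f) (kdeg g)) /\
  (forall (lam : kmor G) (m n : Nk k), kdeg lam = nk_add m n ->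
      exists! mn : kmor G * kmor G,
        ks mn.1 = kr mn.2 /\ kcomp mn.1 mn.2 = lam /\
        kdeg mn.1 = m /\ kdeg mn.2 = n).

Definition is_vertex k (G : kraw k) (v : kmor G) : Prop := kdeg v = nk0 k.

Definition row_finite k (G : kraw k) : Prop :=
  forall (v : kmor G) (n : Nk k), is_vertex v ->
    exists s : seq (kmor G), forall lam, kr lam = v -> kdeg lam = n -> lam \in s.

Definition no_sources k (G : kraw k) : Prop :=
  forall (v : kmor G) (n : Nk k), is_vertex v ->
    exists lam : kmor G, kr lam = v /\ kdeg lam = n.

Definition is_automorphism k (G : kraw k) (phi : kmor G -> kmor G) : Prop :=
  bijective phi /\
  (forall f, kdeg (phi f) = kdeg f) /\
  (forall f, phi (kr f) = kr (phi f)) /\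
  (forall f, phi (ks f) = ks (phi f)) /\
  (forall f g, ks f = kr g -> phi (kcomp f g) = kcomp (phi f) (phi g)).

Definition is_action k l (G : kraw k) (alpha : Zl l -> kmor G -> kmor G) : Prop :=
  (forall m, is_automorphism (alpha m)) /\
  (forall f, alpha (z0 l) f = f) /\
  (forall m n f, alpha (zadd m n) f = alpha m (alpha n f)).

Definition cross k l (G : kraw k) (alpha : Zl l -> kmor G -> kmor G) : kraw (k + l) :=
  @KRaw (k + l) (kmor G * Nk l)%type
    (fun p => (kr p.1, nk0 l))
    (fun p => (alpha (zneg (zofnk p.2)) (ks p.1), nk0 l))
    (fun p q => (kcomp p.1 (alpha (zofnk p.2) q.1), nk_add p.2 q.2))
    (fun p => nk_join (kdeg p.1) p.2).
Arguments cross {k l} G alpha.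

Definition Omega (j : nat) := {ab : Nk j * Nk j | nk_le ab.1 ab.2}.
Definition omk j (a b : Nk j) (h : nk_le a b) : Omega j :=
  exist (fun ab : Nk j * Nk j => nk_le ab.1 ab.2) (a, b) h.

Definition is_inf_path j (G : kraw j) (x : Omega j -> kmor G) : Prop :=
  (forall a b (h : nk_le a b), kdeg (x (omk h)) = nk_sub b a) /\
  (forall a b (h : nk_le a b), kr (x (omk h)) = x (omk (nk_le_refl a))) /\
  (forall a b (h : nk_le a b), ks (x (omk h)) = x (omk (nk_le_refl b))) /\
  (forall a b c (h1 : nk_le a b) (h2 : nk_le b c) (h3 : nk_le a c),
      kcomp (x (omk h1)) (x (omk h2)) = x (omk h3)).

Record ipath j (G : kraw j) := IPath {
  ipfun :> Omega j -> kmor G;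
  ipP : is_inf_path ipfun }.

Definition at0 j (G : kraw j) (x : ipath G) (p : Nk j) : kmor G :=
  x (omk (nk_le0 p)).

Definition in_cyl j (G : kraw j) (lam : kmor G) (x : ipath G) : Prop :=
  at0 x (kdeg lam) = lam.

Definition is_open j (G : kraw j) (U : ipath G -> Prop) : Prop :=
  forall x, U x -> exists lam : kmor G, in_cyl lam x /\ forall y, in_cyl lam y -> U y.

Definition pcontinuous j1 j2 (G1 : kraw j1) (G2 : kraw j2)
  (f : ipath G1 -> ipath G2) : Prop :=
  forall V, is_open V -> is_open (fun x => V (f x)).

Definition is_homeo j1 j2 (G1 : kraw j1) (G2 : kraw j2)
  (f : ipath G1 -> ipath G2) : Prop :=
  exists g : ipath G2 -> ipath G1,
    cancel f g /\ cancel g f /\ pcontinuous f /\ pcontinuous g.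

Definition extends_prop k l (G : kraw k) (alpha : Zl l -> kmor G -> kmor G)
  (h : ipath G -> ipath (cross G alpha)) : Prop :=
  forall (x : ipath G) (p : Nk k),
    at0 (h x) (nk_join p (nk0 l)) = (at0 x p, nk0 l).

(* A path y in the skew product is determined by its restriction to the
   degrees (p, 0): for a <= b, factoring y((a1,0), b) through a and through
   (b1,0) -- where the extra segments have vertex first components -- gives
   y(a, b) = (alpha_{-a2} y((a1,0),(b1,0)).1, b2 - a2).  Hence x |-> (x, oo),
   (x, oo)(a, b) := (alpha_{-a2} x(a1, b1), b2 - a2), is a bijection whose
   inverse is restriction, and it matches cylinders:
   (x, oo) lies in the cylinder of (lam, m) iff x lies in that of lam.
   Uniqueness holds because a path is determined by its initial segments,
   by unique factorisation. *)
From mathcomp Require Import all_boot all_order all_algebra.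
From mathcomp Require Import zify.
From Stdlib Require Import FunctionalExtensionality ProofIrrelevance.

Set Implicit Arguments.
Unset Strict Implicit.
Unset Printing Implicit Defensive.

Import GRing.Theory.

Definition nk_fst k l (a : Nk (k + l)) : Nk k := [ffun i => a (lshift l i)].
Definition nk_snd k l (a : Nk (k + l)) : Nk l := [ffun i => a (rshift k i)].

Section NkArithmetic.
Variables k l : nat.
Implicit Types (m n : Nk k) (a b : Nk (k + l)).

Lemma nk_fst_join m (n : Nk l) : nk_fst (nk_join m n) = m.
Proof. by apply/ffunP => i; rewrite !ffunE (unsplitK (inl _ i)). Qed.

Lemma nk_snd_join m (n : Nk l) : nk_snd (nk_join m n) = n.
Proof. by apply/ffunP => i; rewrite !ffunE (unsplitK (inr _ i)). Qed.

Lemma nk_join_fst_snd a : nk_join (nk_fst a) (nk_snd a) = a.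
Proof.
by apply/ffunP => i; rewrite !ffunE; case: split_ordP => j ->; rewrite ffunE.
Qed.

Lemma nk_join_inj m m' (n n' : Nk l) :
  nk_join m n = nk_join m' n' -> m = m' /\ n = n'.
Proof.
move=> e; split; first by rewrite -(nk_fst_join m n) e nk_fst_join.
by rewrite -(nk_snd_join m n) e nk_snd_join.
Qed.

Lemma nk_sub_join a b :
  nk_sub a b = nk_join (nk_sub (nk_fst a) (nk_fst b)) (nk_sub (nk_snd a) (nk_snd b)).
Proof.
by rewrite -[LHS]nk_join_fst_snd; congr (nk_join _ _); apply/ffunP => i; rewrite !ffunE.
Qed.

Lemma nk_le_fst a b : nk_le a b -> nk_le (nk_fst a) (nk_fst b).
Proof. by move/forallP => h; apply/forallP => i; rewrite !ffunE. Qed.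

Lemma nk_le_snd a b : nk_le a b -> nk_le (nk_snd a) (nk_snd b).
Proof. by move/forallP => h; apply/forallP => i; rewrite !ffunE. Qed.

Lemma nk_le_join m m' (n n' : Nk l) :
  nk_le m m' -> nk_le n n' -> nk_le (nk_join m n) (nk_join m' n').
Proof.
move=> /forallP h1 /forallP h2; apply/forallP => i; rewrite !ffunE.
by case: (split i).
Qed.

Lemma nk_le_join0 a b : nk_le (nk_fst a) (nk_fst b) -> nk_le (nk_join (nk_fst a) (nk0 l)) b.
Proof. by move=> h; rewrite -[b]nk_join_fst_snd nk_le_join ?nk_le0. Qed.

Lemma nk_join00 : nk_join (nk0 k) (nk0 l) = nk0 (k + l).
Proof. by apply/ffunP => i; rewrite !ffunE; case: split => j; rewrite ffunE. Qed.

Lemma nk_fst0 : nk_fst (nk0 (k + l)) = nk0 k.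
Proof. by rewrite -nk_join00 nk_fst_join. Qed.

Lemma nk_snd0 : nk_snd (nk0 (k + l)) = nk0 l.
Proof. by rewrite -nk_join00 nk_snd_join. Qed.

Lemma nk_subnn m : nk_sub m m = nk0 k.
Proof. by apply/ffunP => i; rewrite !ffunE subnn. Qed.

Lemma nk_subn0 m : nk_sub m (nk0 k) = m.
Proof. by apply/ffunP => i; rewrite !ffunE subn0. Qed.

Lemma nk_add_sub m n p : nk_le m n -> nk_le n p ->
  nk_add (nk_sub n m) (nk_sub p n) = nk_sub p m.
Proof.
move=> /forallP h1 /forallP h2; apply/ffunP => i; rewrite !ffunE.
by have := h1 i; have := h2 i; lia.
Qed.

Lemma nk_addr_eq0 m n : m = nk_add m n -> n = nk0 k.
Proof.
move=> e; apply/ffunP => i; have := congr1 (fun f : Nk k => f i) e.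
by rewrite /= !ffunE; lia.
Qed.

Lemma nk_addl_eq0 m n : m = nk_add n m -> n = nk0 k.
Proof.
move=> e; apply/ffunP => i; have := congr1 (fun f : Nk k => f i) e.
by rewrite /= !ffunE; lia.
Qed.

End NkArithmetic.

Section ZlArithmetic.
Variable l : nat.
Implicit Types (m n : Nk l) (z : Zl l).

Lemma zofnk0 : zofnk (nk0 l) = z0 l.
Proof. by apply/ffunP => i; rewrite !ffunE. Qed.

Lemma zneg0 : zneg (z0 l) = z0 l.
Proof. by apply/ffunP => i; rewrite !ffunE. Qed.

Lemma zaddNz z : zadd (zneg z) z = z0 l.
Proof. by apply/ffunP => i; rewrite !ffunE; lia. Qed.

Lemma zaddzN z : zadd z (zneg z) = z0 l.
Proof. by apply/ffunP => i; rewrite !ffunE; lia. Qed.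

Lemma zadd_neg_sub m n : nk_le m n ->
  zadd (zneg (zofnk (nk_sub n m))) (zneg (zofnk m)) = zneg (zofnk n).
Proof. by move=> /forallP h; apply/ffunP => i; rewrite !ffunE; have := h i; lia. Qed.

Lemma zadd_sub_neg m n : nk_le m n ->
  zadd (zofnk (nk_sub n m)) (zneg (zofnk n)) = zneg (zofnk m).
Proof. by move=> /forallP h; apply/ffunP => i; rewrite !ffunE; have := h i; lia. Qed.

End ZlArithmetic.

Section InfinitePaths.
Variables (j : nat) (G : kraw j).
Implicit Types (x y : ipath G) (a b c : Nk j).

Lemma omk_congr (T : Type) (f : Omega j -> T) a a' b b'
    (h : nk_le a b) (h' : nk_le a' b') :
  a = a' -> b = b' -> f (omk h) = f (omk h').
Proof. by move=> ea eb; subst; rewrite (bool_irrelevance h h'). Qed.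

Lemma ipath_deg x a b (h : nk_le a b) : kdeg (x (omk h)) = nk_sub b a.
Proof. by case: (ipP x). Qed.

Lemma ipath_kr x a b (h : nk_le a b) : kr (x (omk h)) = x (omk (nk_le_refl a)).
Proof. by case: (ipP x) => _ []. Qed.

Lemma ipath_ks x a b (h : nk_le a b) : ks (x (omk h)) = x (omk (nk_le_refl b)).
Proof. by case: (ipP x) => _ [] _ []. Qed.

Lemma ipath_kcomp x a b c (h1 : nk_le a b) (h2 : nk_le b c) (h3 : nk_le a c) :
  kcomp (x (omk h1)) (x (omk h2)) = x (omk h3).
Proof. by case: (ipP x) => _ [] _ [] _; apply. Qed.

Lemma ipath_composable x a b c (h1 : nk_le a b) (h2 : nk_le b c) :
  ks (x (omk h1)) = kr (x (omk h2)).
Proof. by rewrite ipath_ks ipath_kr. Qed.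

Lemma ipath_ext x y : (forall a b (h : nk_le a b), x (omk h) = y (omk h)) -> x = y.
Proof.
case: x => f Pf; case: y => g Pg /= e.
have efg : f = g by apply: functional_extensionality => -[[a b] h]; exact: e.
by subst g; rewrite (proof_irrelevance _ Pf Pg).
Qed.

End InfinitePaths.

Section KGraph.
Variables (j : nat) (G : kraw j).
Hypothesis HG : is_kgraph G.
Implicit Types (f g v : kmor G).

Lemma kcomp_kr f : kcomp (kr f) f = f.
Proof. by case: HG => _ [] _ [] _ [] _ [] ->. Qed.

Lemma kcomp_ks f : kcomp f (ks f) = f.
Proof. by case: HG => _ [] _ [] _ [] _ [] _ [] ->. Qed.

Lemma ks_kr f : ks (kr f) = kr f.
Proof. by case: HG => _ [] ->. Qed.

Lemma kr_ks f : kr (ks f) = ks f.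
Proof. by case: HG => _ [] _ [] ->. Qed.

Lemma kdeg_kcomp f g : ks f = kr g -> kdeg (kcomp f g) = nk_add (kdeg f) (kdeg g).
Proof. by case: HG => _ [] _ [] _ [] _ [] _ [] _ [] _ [] _ [] + _; apply. Qed.

Lemma kfactor_uniq f g f' g' : ks f = kr g -> ks f' = kr g' ->
  kcomp f g = kcomp f' g' -> kdeg f = kdeg f' -> kdeg g = kdeg g' ->
  f = f' /\ g = g'.
Proof.
case: HG => _ [] _ [] _ [] _ [] _ [] _ [] _ [] _ [] _ Hfact fg f'g' e df dg.
have [mn [_ Hu]] := Hfact (kcomp f g) (kdeg f) (kdeg g) (kdeg_kcomp fg).
have := Hu (f, g) (conj fg (conj erefl (conj erefl erefl))).
have := Hu (f', g') (conj f'g' (conj (esym e) (conj (esym df) (esym dg)))).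
by move=> -> [-> ->].
Qed.

Lemma vertex_krks v : is_vertex v -> kr v = v /\ ks v = v.
Proof.
move=> dv.
have ds : kdeg (ks v) = nk0 j.
  by apply: (@nk_addr_eq0 _ (kdeg v)); rewrite -kdeg_kcomp ?kcomp_ks ?kr_ks.
have dr : kdeg (kr v) = nk0 j.
  by apply: (@nk_addl_eq0 _ (kdeg v)); rewrite -kdeg_kcomp ?kcomp_kr ?ks_kr.
have [-> e] : kr v = v /\ v = ks v.
  by apply: kfactor_uniq; rewrite ?ks_kr ?kr_ks ?kcomp_kr ?kcomp_ks ?dr ?dv ?ds.
by rewrite -e.
Qed.

Lemma ipath_eq_at0 (x y : ipath G) : (forall p, at0 x p = at0 y p) -> x = y.
Proof.
move=> e; apply: ipath_ext => a b h.
pose ha := nk_le0 a; pose hb := nk_le0 b.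
suff [] : x (omk ha) = y (omk ha) /\ x (omk h) = y (omk h) by [].
apply: kfactor_uniq; rewrite ?ipath_deg //; try exact: ipath_composable.
by rewrite (ipath_kcomp x ha h hb) (ipath_kcomp y ha h hb); apply: e.
Qed.

End KGraph.

Section SkewProduct.
Variables (k l : nat) (G : kraw k) (alpha : Zl l -> kmor G -> kmor G).
Hypothesis HG : is_kgraph G.
Hypothesis Ha : is_action alpha.
Implicit Types (f g : kmor G) (x : ipath G) (y : ipath (cross G alpha)).

Lemma alpha0 f : alpha (z0 l) f = f.
Proof. by case: Ha => _ []. Qed.

Lemma alpha_comp m n f : alpha m (alpha n f) = alpha (zadd m n) f.
Proof. by case: Ha => _ [] _ ->. Qed.

Lemma alpha_deg m f : kdeg (alpha m f) = kdeg f.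
Proof. by case: Ha => /(_ m) [] _ []. Qed.

Lemma alpha_kr m f : alpha m (kr f) = kr (alpha m f).
Proof. by case: Ha => /(_ m) [] _ [] _ []. Qed.

Lemma alpha_ks m f : alpha m (ks f) = ks (alpha m f).
Proof. by case: Ha => /(_ m) [] _ [] _ [] _ []. Qed.

Lemma alpha_kcomp m f g : ks f = kr g ->
  alpha m (kcomp f g) = kcomp (alpha m f) (alpha m g).
Proof. by case: Ha => /(_ m) [] _ [] _ [] _ [] _ c _; apply: c. Qed.

Lemma cross_kcomp_vertexl (u w : kmor (cross G alpha)) :
  is_vertex u.1 -> ks u = kr w -> (kcomp u w).1 = alpha (zofnk u.2) w.1.
Proof.
case: u w => [u1 u2] [w1 w2] /= /(vertex_krks HG) [_ us] [].
rewrite us => e.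
have -> : u1 = kr (alpha (zofnk u2) w1).
  by rewrite -alpha_kr -e alpha_comp zaddzN alpha0.
exact: kcomp_kr.
Qed.

Lemma cross_kcomp_vertexr (u w : kmor (cross G alpha)) :
  is_vertex w.1 -> ks u = kr w -> (kcomp u w).1 = u.1.
Proof.
case: u w => [u1 u2] [w1 w2] /= /(vertex_krks HG) [wr _] [].
rewrite wr => <-.
by rewrite alpha_comp zaddzN alpha0 kcomp_ks.
Qed.

Lemma cross_ipath_deg1 y a b (h : nk_le a b) :
  kdeg (y (omk h)).1 = nk_sub (nk_fst b) (nk_fst a).
Proof. by have := ipath_deg y h; rewrite /= nk_sub_join => /nk_join_inj []. Qed.

Lemma cross_ipath_deg2 y a b (h : nk_le a b) :
  (y (omk h)).2 = nk_sub (nk_snd b) (nk_snd a).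
Proof. by have := ipath_deg y h; rewrite /= nk_sub_join => /nk_join_inj []. Qed.

Definition extend_fun x (o : Omega (k + l)) : kmor (cross G alpha) :=
  (alpha (zneg (zofnk (nk_snd (sval o).1))) (x (omk (nk_le_fst (svalP o)))),
   nk_sub (nk_snd (sval o).2) (nk_snd (sval o).1)).

Lemma extend_funE x a b (h : nk_le a b) :
  extend_fun x (omk h) =
  (alpha (zneg (zofnk (nk_snd a))) (x (omk (nk_le_fst h))), nk_sub (nk_snd b) (nk_snd a)).
Proof. by rewrite /extend_fun; congr (alpha _ _, _); apply: omk_congr. Qed.

Lemma extend_funP x : is_inf_path (extend_fun x).
Proof.
split; [|split; [|split]] => [a b h | a b h | a b h | a b c h1 h2 h3]; rewrite !extend_funE.
- by rewrite /= alpha_deg ipath_deg [RHS]nk_sub_join.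
- rewrite /= -alpha_kr ipath_kr nk_subnn; congr (alpha _ _, _); exact: omk_congr.
- rewrite /= -alpha_ks ipath_ks alpha_comp zadd_neg_sub ?nk_le_snd // nk_subnn.
  congr (alpha _ _, _); exact: omk_congr.
- rewrite /= alpha_comp zadd_sub_neg ?nk_le_snd // -alpha_kcomp; last first.
    exact: ipath_composable.
  by rewrite (ipath_kcomp _ _ _ (nk_le_fst h3)) nk_add_sub ?nk_le_snd.
Qed.

Definition extend x : ipath (cross G alpha) := IPath (extend_funP x).

Lemma at0_extend x p q : at0 (extend x) (nk_join p q) = (at0 x p, q).
Proof.
rewrite /at0 /= extend_funE nk_snd0 nk_snd_join nk_subn0 zofnk0 zneg0 alpha0.
by congr (_, _); apply: omk_congr; rewrite ?nk_fst0 ?nk_fst_join.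
Qed.

Definition restrict_fun y (o : Omega k) : kmor G :=
  (y (omk (nk_le_join (svalP o) (nk_le_refl (nk0 l))))).1.

Lemma restrict_funE y a b (h : nk_le a b) :
  restrict_fun y (omk h) = (y (omk (nk_le_join h (nk_le_refl (nk0 l))))).1.
Proof. by rewrite /restrict_fun; congr fst; apply: omk_congr. Qed.

Lemma restrict_funP y : is_inf_path (restrict_fun y).
Proof.
split; [|split; [|split]] => [a b h | a b h | a b h | a b c h1 h2 h3];
  rewrite !restrict_funE.
- by rewrite cross_ipath_deg1 !nk_fst_join.
- have := congr1 fst (ipath_kr y (nk_le_join h (nk_le_refl (nk0 l)))) => /= ->.
  by congr fst; apply: omk_congr.
- have := congr1 fst (ipath_ks y (nk_le_join h (nk_le_refl (nk0 l)))).
  rewrite /= cross_ipath_deg2 !nk_snd_join nk_subnn zofnk0 zneg0 alpha0 => ->.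
  by congr fst; apply: omk_congr.
- have := congr1 fst (ipath_kcomp y (nk_le_join h1 (nk_le_refl (nk0 l)))
    (nk_le_join h2 (nk_le_refl (nk0 l))) (nk_le_join h3 (nk_le_refl (nk0 l)))).
  by rewrite /= cross_ipath_deg2 !nk_snd_join nk_subnn zofnk0 alpha0.
Qed.

Definition restrict y : ipath G := IPath (restrict_funP y).

Lemma at0_restrict y p : at0 (restrict y) p = (at0 y (nk_join p (nk0 l))).1.
Proof.
by rewrite /at0 /= /restrict_fun; congr fst; apply: omk_congr; rewrite ?nk_join00.
Qed.

Lemma restrictK : cancel extend restrict.
Proof.
move=> x; apply: ipath_ext => a b h.
rewrite /= restrict_funE /extend /= nk_snd_join zofnk0 zneg0 alpha0.
by apply: omk_congr; rewrite /= ?nk_fst_join.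
Qed.

Lemma extendK : cancel restrict extend.
Proof.
move=> y; apply: ipath_ext => a b h.
rewrite /extend /= /restrict extend_funE /= restrict_funE.
rewrite [RHS]surjective_pairing cross_ipath_deg2.
congr (_, _).
set P := nk_join (nk_fst a) (nk0 l); set Q := nk_join (nk_fst b) (nk0 l).
have hPa : nk_le P a by apply: nk_le_join0; apply: nk_le_refl.
have hPb : nk_le P b by apply: nk_le_join0; apply: nk_le_fst.
have hQb : nk_le Q b by apply: nk_le_join0; apply: nk_le_refl.
pose hPQ : nk_le P Q := nk_le_join (nk_le_fst h) (nk_le_refl (nk0 l)).
have via_a : (y (omk hPb)).1 = alpha (zofnk (nk_snd a)) (y (omk h)).1.
  rewrite -(ipath_kcomp _ hPa h) cross_kcomp_vertexl; last exact: ipath_composable.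
    by rewrite cross_ipath_deg2 nk_snd_join nk_subn0.
  by rewrite /is_vertex cross_ipath_deg1 nk_fst_join nk_subnn.
have via_Q : (y (omk hPb)).1 = (y (omk hPQ)).1.
  rewrite -(ipath_kcomp _ hPQ hQb) cross_kcomp_vertexr //; last exact: ipath_composable.
  by rewrite /is_vertex cross_ipath_deg1 nk_fst_join nk_subnn.
by rewrite -via_Q via_a alpha_comp zaddNz alpha0.
Qed.

Lemma in_cyl_extend x lam m :
  in_cyl ((lam, m) : kmor (cross G alpha)) (extend x) <-> in_cyl lam x.
Proof.
rewrite /in_cyl.
change (at0 (extend x) (nk_join (kdeg lam) m) = (lam, m) <-> at0 x (kdeg lam) = lam).
by rewrite at0_extend; split=> [[]|->].
Qed.

Lemma in_cyl_restrict y lam :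
  in_cyl lam (restrict y) <-> in_cyl ((lam, nk0 l) : kmor (cross G alpha)) y.
Proof.
rewrite /in_cyl at0_restrict; set z := at0 y (nk_join (kdeg lam) (nk0 l)).
change (z.1 = lam <-> z = (lam, nk0 l)).
split=> [e|-> //]; rewrite [LHS]surjective_pairing e; congr (_, _).
by rewrite /at0 cross_ipath_deg2 nk_snd_join nk_snd0 nk_subnn.
Qed.

Lemma extend_continuous : pcontinuous extend.
Proof.
move=> V HV x Vx; have [[lam m] [/in_cyl_extend x_lam sub_V]] := HV _ Vx.
by exists lam; split=> // z /(in_cyl_extend z lam m) /sub_V.
Qed.

Lemma restrict_continuous : pcontinuous restrict.
Proof.
move=> V HV y Vy; have [lam [/in_cyl_restrict y_lam sub_V]] := HV _ Vy.
by exists (lam, nk0 l); split=> // z /in_cyl_restrict /sub_V.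
Qed.

End SkewProduct.

Theorem proposition4p4 (k l : nat) (G : kraw k) (alpha : Zl l -> kmor G -> kmor G) :
  is_kgraph G -> row_finite G -> no_sources G -> is_action alpha ->
  exists h : ipath G -> ipath (cross G alpha),
    (is_homeo h /\ extends_prop h) /\
    forall h' : ipath G -> ipath (cross G alpha),
      is_homeo h' /\ extends_prop h' -> h' = h.
Proof.
move=> HG _ _ Ha; exists (extend Ha); split; [split|].
- exists (restrict Ha); split; first exact: restrictK.
  split; first exact: extendK.
  by split; [apply: extend_continuous | apply: restrict_continuous].
- by move=> x p; rewrite at0_extend.
- move=> h' [_ h'_ext]; apply: functional_extensionality => x.
  rewrite -(extendK HG Ha (h' x)); congr (extend Ha _).
  by apply: (ipath_eq_at0 HG) => p; rewrite at0_restrict h'_ext.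
Qed.
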